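(* Let $e\ge3$, let $A$ be an arm sequence and $n\in\mathbb N$, and let $y=\max\{A_t/t: t\in\{1,\dots,n\}\}$. Then $A_t=\lfloor yt\rfloor$ for $t=1,\dots,n$. Consequently $\mathcal R_A^{(n)}=\mathcal R_{A^{y+}}^{(n)}$.
   Context: An arm sequence is an integer sequence $A=(A_1,A_2,\dots)$ with $t-1\le A_t\le(e-1)t$ and $A_{t+u}\in\{A_t+A_u,A_t+A_u+1\}$ for all $t,u\ge1$. For real $y\in[1,e-1]$, $A^{y+}$ is the arm sequence $A^{y+}_t=\lfloor yt\rfloor$. $\mathcal R_A$ is the crystal whose vertices are the $A$-regular partitions (no hook of length $et$ and arm length $A_t$ for any $t\ge1$) with arrows $\lambda\xrightarrow{i}f_i\lambda$ defined by the $A$-dependent $i$-signature rule (for distinct $i$-nodes $(r,c),(s,d)$ with $s-r+c-d=et$, $t\ge0$ after swapping, $(r,c)\prec(s,d)$ iff $c-d\le A_t$, $A_0:=0$; addable/removable $i$-nodes in decreasing order give a $\pm$ word, adjacent $+-$ cancelled; $f_i$ adds the node of the first remaining $+$). $\mathcal R_A^{(n)}$ denotes the induced subgraph on partitions of size at most $ne$. *)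

From mathcomp Require Import all_boot all_order all_algebra.
Set Implicit Arguments. Unset Strict Implicit. Unset Printing Implicit Defensive.
Import Order.TTheory GRing.Theory Num.Theory.
Local Open Scope ring_scope.

(* Sequences are indexed from 1: A t for t >= 1 (the value A 0 is irrelevant;
   in the ordering rule the convention A_0 := 0 is used, see Aext). *)

Definition arm_seq (e : nat) (A : nat -> int) : Prop :=
  (forall t : nat, (0 < t)%N -> (t.-1)%:Z <= A t <= ((e.-1 * t)%N)%:Z) /\
  (forall t u : nat, (0 < t)%N -> (0 < u)%N ->
     A (t + u)%N = A t + A u \/ A (t + u)%N = A t + A u + 1).

Definition Aplus (y : rat) : nat -> int := fun t => Num.floor (y * t%:R).

Definition Aext (A : nat -> int) (t : nat) : int := if t == 0%N then 0 else A t.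

Definition is_partition (l : seq nat) : bool :=
  sorted (fun x y => (y <= x)%N) l && all (fun x => (0 < x)%N) l.

Definition node := (nat * nat)%type.  (* (row, column), both 1-indexed *)

Definition prow (l : seq nat) (r : nat) : nat := if r is r'.+1 then nth 0%N l r' else 0%N.
Definition pcol (l : seq nat) (c : nat) : nat := count (fun x => (c <= x)%N) l.

Definition in_diagram (l : seq nat) (x : node) : bool :=
  [&& (0 < x.1)%N, (0 < x.2)%N & (x.2 <= prow l x.1)%N].

Definition arm (l : seq nat) (x : node) : nat := (prow l x.1 - x.2)%N.
Definition leg (l : seq nat) (x : node) : nat := (pcol l x.2 - x.1)%N.
Definition hook_length (l : seq nat) (x : node) : nat := (arm l x + leg l x).+1.

Definition regular (e : nat) (A : nat -> int) (l : seq nat) : Prop :=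
  forall x : node, in_diagram l x -> forall t : nat, (0 < t)%N ->
    ~ (hook_length l x = (e * t)%N /\ (arm l x)%:Z = A t).

Definition residue (e : nat) (x : node) : int := ((x.2%:Z - x.1%:Z) %% e%:Z)%Z.

Definition addable_nodes (l : seq nat) : seq node :=
  [seq (r, (prow l r).+1) | r <- iota 1 (size l).+1 &
      (r == 1%N) || (prow l r < prow l r.-1)%N].

Definition removable_nodes (l : seq nat) : seq node :=
  [seq (r, prow l r) | r <- iota 1 (size l) & (prow l r.+1 < prow l r)%N].

Definition signed_inodes (e i : nat) (l : seq nat) : seq (bool * node) :=
  [seq (true, x) | x <- addable_nodes l & residue e x == i%:Z] ++
  [seq (false, x) | x <- removable_nodes l & residue e x == i%:Z].

(** The A-dependent order: for i-nodes x = (r,c), y = (s,d), with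
    D = s - r + c - d (= e t). If D >= 0 then x < y iff c - d <= A_t;
    otherwise (swapping) y < x iff d - c <= A_{t'} with -D = e t', and x < y
    iff not y < x. *)
Definition nprec (e : nat) (A : nat -> int) (x y : node) : bool :=
  let D := (y.1%:Z - x.1%:Z) + (x.2%:Z - y.2%:Z) in
  if 0 <= D then x.2%:Z - y.2%:Z <= Aext A `|(D %/ e%:Z)%Z|%N
  else ~~ (y.2%:Z - x.2%:Z <= Aext A `|((- D) %/ e%:Z)%Z|%N).

(** Cancellation of adjacent +- pairs (repeatedly), via a stack. *)
Definition cancel_step (st : seq (bool * node)) (z : bool * node) :=
  match z, st with
  | (false, _), (true, _) :: st' => st'
  | _, _ => z :: st
  end.

Definition reduced_word (w : seq (bool * node)) : seq (bool * node) :=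
  rev (foldl cancel_step [::] w).

Definition first_plus (w : seq (bool * node)) : option node :=
  match [seq z <- reduced_word w | z.1] with
  | z :: _ => Some z.2
  | [::] => None
  end.

Definition add_node (l : seq nat) (x : node) : seq nat := set_nth 0%N l x.1.-1 x.2.

(** Arrows of the crystal R_A: l --i--> f_i l, between A-regular partitions.
    The signed i-nodes are listed in decreasing order for the A-order. *)
Definition crystal_arrow (e : nat) (A : nat -> int) (i : nat) (l m : seq nat) : Prop :=
  is_partition l /\ regular e A l /\ regular e A m /\
  exists w : seq (bool * node),
    [/\ perm_eq w (signed_inodes e i l),
        pairwise (fun a b => nprec e A b.2 a.2) w &
        exists x, first_plus w = Some x /\ m = add_node l x].

Definition subcrystal_eq (e n : nat) (A B : nat -> int) : Prop :=
  (forall l, is_partition l -> (sumn l <= n * e)%N -> (regular e A l <-> regular e B l)) /\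
  (forall (i : nat) l m, (i < e)%N -> is_partition l -> is_partition m ->
     (sumn l <= n * e)%N -> (sumn m <= n * e)%N ->
     (crystal_arrow e A i l m <-> crystal_arrow e B i l m)).

From mathcomp Require Import all_boot all_order all_algebra.
From mathcomp Require Import zify lra.
Import Order.TTheory GRing.Theory Num.Theory.
Local Open Scope ring_scope.

(* Iterating the
   almost-additivity A_{t+u} ∈ {A_t + A_u, A_t + A_u + 1} gives
   k A_t <= A_{kt} and A_{kt} + 1 <= k (A_t + 1); comparing A_{st} computed
   from s and from t yields the strict inequality t A_s < s (A_t + 1), i.e.
   A_s / s < (A_t + 1) / t for all s, t >= 1.  If y = A_s / s is the maximal
   ratio on 1..n, then A_t <= y t < A_t + 1, so A_t = floor (y t).  In a partition of
   size at most n e every hook has length at most n e, and the residue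
   comparison of two signed nodes only consults A_t with e t bounded by the
   size of the partition plus its first row plus 2 < (n + 1) e (as e >= 3).
   Hence two sequences agreeing on 1..n define the same regular partitions
   and the same arrows in R^(n); applied to A and A^{y+} this is the theorem. *)

(* Almost additivity: the only property of arm sequences used in Part 1. *)
Definition almost_additive (A : nat -> int) : Prop :=
  forall t u : nat, (0 < t)%N -> (0 < u)%N ->
    A (t + u)%N = A t + A u \/ A (t + u)%N = A t + A u + 1.

Lemma arm_seq_almost_additive (e : nat) (A : nat -> int) :
  arm_seq e A -> almost_additive A.
Proof. by case. Qed.

Section AlmostAdditive.
Variable A : nat -> int.
Hypothesis addA : almost_additive A.

Lemma almost_additive_mul (t k : nat) : (0 < t)%N -> (0 < k)%N ->
  k%:Z * A t <= A (k * t)%N /\ A (k * t)%N + 1 <= k%:Z * (A t + 1).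
Proof.
move=> t_gt0; elim: k => [//|k IHk] _.
have [->|k_gt0] := posnP k; first by rewrite mul1n mul1r; lra.
have [lo hi] := IHk k_gt0.
have kt_gt0 : (0 < k * t)%N by rewrite muln_gt0 k_gt0.
rewrite mulSn -[k.+1]addn1 PoszD.
by case: (addA t (k * t)%N t_gt0 kt_gt0) => ->; split; nia.
Qed.

Lemma ratio_gap (s t : nat) : (0 < s)%N -> (0 < t)%N ->
  t%:Z * A s < s%:Z * (A t + 1).
Proof.
move=> s_gt0 t_gt0.
have [lo _] := almost_additive_mul s t s_gt0 t_gt0.
have [_ hi] := almost_additive_mul t s t_gt0 s_gt0.
by rewrite mulnC in hi; lia.
Qed.

End AlmostAdditive.

Lemma floor_of_ratio_gap (a b : int) (s t : nat) :
  (0 < s)%N -> (0 < t)%N ->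
  b%:~R / t%:R <= a%:~R / s%:R :> rat -> t%:Z * a < s%:Z * (b + 1) ->
  Num.floor (a%:~R / s%:R * t%:R : rat) = b.
Proof.
move=> s_gt0 t_gt0; rewrite -(ltr_int rat) !intrM !intrD /= !pmulrn.
have s_pos : 0 < s%:R :> rat by rewrite ltr0n.
have t_pos : 0 < t%:R :> rat by rewrite ltr0n.
move=> le_ratio gap; apply: floor_def; rewrite intrD /=.
rewrite -ler_pdivrMr // le_ratio /= mulrAC ltr_pdivrMr //.
by rewrite mulrC [X in _ < X]mulrC.
Qed.

Lemma floor_of_max_ratio (A : nat -> int) (n : nat) (y : rat) :
  almost_additive A ->
  (exists2 t : nat, (1 <= t <= n)%N & y = (A t)%:~R / t%:R) ->
  (forall t : nat, (1 <= t <= n)%N -> (A t)%:~R / t%:R <= y) ->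
  forall t : nat, (1 <= t <= n)%N -> A t = Num.floor (y * t%:R).
Proof.
move=> addA [s /andP[s_gt0 _] ->] max_y t /[dup] t_range /andP[t_gt0 _].
apply/esym/floor_of_ratio_gap => //; first exact: max_y.
exact: ratio_gap.
Qed.

Lemma size_le_sumn (l : seq nat) : all (fun x => (0 < x)%N) l -> (size l <= sumn l)%N.
Proof. by elim: l => [//|a l IHl] /= /andP[a_gt0 /IHl]; lia. Qed.

Lemma size_add_head_le (l : seq nat) : all (fun x => (0 < x)%N) l ->
  (size l + head 0%N l <= (sumn l).+1)%N.
Proof. by case: l => [//|a l] /= /andP[_ /size_le_sumn]; lia. Qed.

Lemma nth_le_head (l : seq nat) (i : nat) : sorted (fun x y => (y <= x)%N) l ->
  (nth 0%N l i <= head 0%N l)%N.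
Proof.
elim: l i => [|a l IHl] [|i] //= l_sorted.
apply: leq_trans (IHl i (path_sorted l_sorted)) _.
by case: l l_sorted {IHl} => [//|b l] /= /andP[].
Qed.

Lemma prow_le_head (l : seq nat) (r : nat) : sorted (fun x y => (y <= x)%N) l ->
  (prow l r <= head 0%N l)%N.
Proof. by case: r => [|r] //= /nth_le_head. Qed.

Lemma hook_length_le_sumn (l : seq nat) (x : node) :
  is_partition l -> in_diagram l x -> (hook_length l x <= sumn l)%N.
Proof.
case/andP=> l_sorted l_pos; case: x => r c /and3P[/= r_gt0 c_gt0 c_le].
have := prow_le_head l r l_sorted; have := size_add_head_le l l_pos.
have : (pcol l c <= size l)%N by apply: count_size.
have : (head 0%N l <= sumn l)%N.
  by case: l {l_sorted l_pos c_le} => //= a l; apply: leq_addr.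
by rewrite /hook_length /arm /leg /=; lia.
Qed.

Lemma signed_inode_bounds {e i : nat} {l : seq nat} {z : bool * node} :
  sorted (fun x y => (y <= x)%N) l -> z \in signed_inodes e i l ->
  (1 <= z.2.1 <= (size l).+1)%N /\ (z.2.2 <= (head 0%N l).+1)%N.
Proof.
move=> l_sorted; rewrite mem_cat.
by case/orP=> /mapP[x]; rewrite mem_filter => /andP[_ /mapP[r]];
  rewrite mem_filter mem_iota => /andP[_ r_range] -> -> /=;
  have := prow_le_head l r l_sorted; lia.
Qed.

Section AgreeingSequences.
Variables (e n : nat) (A B : nat -> int).
Hypothesis e_ge3 : (3 <= e)%N.
Hypothesis agreeAB : forall t : nat, (1 <= t <= n)%N -> A t = B t.

Lemma Aext_agree (k : nat) : (k <= n)%N -> Aext A k = Aext B k.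
Proof. by rewrite /Aext; case: eqP => // /eqP k_neq0 k_le; apply: agreeAB; lia. Qed.

(* For nodes in a rectangle of rows 1..S+1 and columns 0..H+1 the difference
   D of contents has |D| <= S + H + 1 <= n e + 2 < (n + 1) e, so the order
   only consults Aext at arguments at most n. *)
Lemma nprec_agree (S H : nat) (x z : node) : (S + H <= n * e + 1)%N ->
  (1 <= x.1 <= S.+1)%N -> (x.2 <= H.+1)%N ->
  (1 <= z.1 <= S.+1)%N -> (z.2 <= H.+1)%N ->
  nprec e A x z = nprec e B x z.
Proof.
case: x z => x1 x2 [z1 z2] /= rect x1_range x2_le z1_range z2_le.
by rewrite /nprec /=; case: ifP => D_sign; rewrite Aext_agree //; move: D_sign; nia.
Qed.

(* Regularity only tests A_t for e t a hook length, hence t <= n. *)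
Lemma regular_agree (l : seq nat) : is_partition l -> (sumn l <= n * e)%N ->
  regular e A l <-> regular e B l.
Proof.
move=> l_part l_size.
have AB_hook x t : in_diagram l x -> (0 < t)%N -> hook_length l x = (e * t)%N ->
    A t = B t.
  move=> x_in t_gt0 hook_eq; apply: agreeAB.
  have := leq_trans (hook_length_le_sumn l x l_part x_in) l_size.
  by rewrite hook_eq; nia.
by split=> reg x x_in t t_gt0 [hook_eq arm_eq]; apply: (reg x x_in t t_gt0);
  rewrite arm_eq (AB_hook x t).
Qed.

(* The arrows of R^(n) agree: the regularity conditions agree by
   regular_agree, and the A- and B-orders coincide on the signed i-nodes of l,
   which all lie in the rectangle controlled by nprec_agree. *)
Lemma crystal_arrow_agree (i : nat) (l m : seq nat) :
  is_partition l -> is_partition m ->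
  (sumn l <= n * e)%N -> (sumn m <= n * e)%N ->
  crystal_arrow e A i l m <-> crystal_arrow e B i l m.
Proof.
move=> l_part m_part l_size m_size.
have reg_l := regular_agree l l_part l_size.
have reg_m := regular_agree m m_part m_size.
have /andP[l_sorted l_pos] := l_part.
have rect := size_add_head_le l l_pos.
have order_agree w : perm_eq w (signed_inodes e i l) ->
    pairwise (fun a b => nprec e A b.2 a.2) w =
    pairwise (fun a b => nprec e B b.2 a.2) w.
  move=> w_perm; apply: (eq_in_pairwise (P := mem w)); last exact: allss.
  move=> a b; rewrite !(perm_mem w_perm).
  move=> /(signed_inode_bounds l_sorted) [a1 a2] /(signed_inode_bounds l_sorted) [b1 b2].
  by apply: (nprec_agree (size l) (head 0%N l)) => //; lia.
rewrite /crystal_arrow reg_l reg_m.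
by split=> -[l_part' [reg_l' [reg_m' [w [w_perm w_order w_plus]]]]];
  do 3!split=> //; exists w; split=> //; rewrite (order_agree w w_perm) in w_order *.
Qed.

Lemma subcrystal_eq_of_agree : subcrystal_eq e n A B.
Proof.
split=> [l l_part l_size | i l m _ l_part m_part l_size m_size].
  exact: regular_agree.
exact: crystal_arrow_agree.
Qed.

End AgreeingSequences.

Theorem mainTheorem9 (e : nat) (A : nat -> int) (n : nat) (y : rat) :
  (3 <= e)%N -> arm_seq e A -> (1 <= n)%N ->
  (exists2 t : nat, (1 <= t <= n)%N & y = (A t)%:~R / t%:R) ->
  (forall t : nat, (1 <= t <= n)%N -> (A t)%:~R / t%:R <= y) ->
  (forall t : nat, (1 <= t <= n)%N -> A t = Num.floor (y * t%:R)) /\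
  subcrystal_eq e n A (Aplus y).
Proof.
move=> e_ge3 armA _ y_attained y_max.
have addA := arm_seq_almost_additive e A armA.
have beatty := floor_of_max_ratio A n y addA y_attained y_max.
split=> //.
by apply: subcrystal_eq_of_agree e_ge3 _ => t /beatty.
Qed.
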